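(* Let $\mathcal{C}_1$ and $\mathcal{C}_2$ be binary linear codes with parameters $(n_1,k_1,d_1)$ and $(n_2,k_2,d_2)$, respectively. Then $\mathcal{C}_3 = \{(u,v) : u \in \mathcal{C}_1,\ v\in \mathcal{C}_2\}$ is an $(n_1+n_2,\,k_1+k_2,\,\min\{d_1,d_2\})$ code with $$\rho(\mathcal{C}_3) \le \rho(\mathcal{C}_1) + \rho(\mathcal{C}_2).$$
   Context: An $(n,k,d)$ code is a linear code of length $n$, dimension $k$ and minimum Hamming distance $d$. A parity-check matrix for a linear code $\mathcal{C}$ is any matrix (possibly with linearly dependent rows) whose rows span $\mathcal{C}^\perp$. For a parity-check matrix $H$, the stopping distance $s(H)$ is the largest integer such that for every set of $s(H)-1$ or fewer columns of $H$, the projection of $H$ onto those columns contains at least one row of Hamming weight exactly one. The stopping redundancy $\rho(\mathcal{C})$ is the smallest number of rows of a parity-check matrix $H$ for $\mathcal{C}$ with $s(H) = d(\mathcal{C})$, the minimum distance of $\mathcal{C}$. *)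

From mathcomp Require Import all_boot all_algebra.
Set Implicit Arguments. Unset Strict Implicit. Unset Printing Implicit Defensive.
Import GRing.Theory.
Local Open Scope ring_scope.

Definition is_linear_code n (C : {set 'rV['F_2]_n}) : Prop :=
  forall (a : 'F_2) x y, x \in C -> y \in C -> a *: x + y \in C.

Definition wt n (x : 'rV['F_2]_n) : nat := #|[set j : 'I_n | x 0 j != 0]|.

Definition code_dim n (C : {set 'rV['F_2]_n}) (k : nat) : Prop :=
  is_linear_code C /\ #|C| = (2 ^ k)%N.

(* minimum Hamming distance of a linear code = minimum nonzero weight *)
Definition min_dist n (C : {set 'rV['F_2]_n}) (d : nat) : Prop :=
  (exists2 c, c \in C & (c != 0) && (wt c == d)) /\
  (forall c, c \in C -> c != 0 -> (d <= wt c)%N).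

Definition is_code n (C : {set 'rV['F_2]_n}) (k d : nat) : Prop :=
  is_linear_code C /\ code_dim C k /\ min_dist C d.

Definition dual_code n (C : {set 'rV['F_2]_n}) : {set 'rV['F_2]_n} :=
  [set y : 'rV['F_2]_n | [forall x in C, x *m y^T == 0]].

(* H (r rows, possibly dependent) is a parity-check matrix for C:
   its rows span the dual code *)
Definition parity_check n r (C : {set 'rV['F_2]_n}) (H : 'M['F_2]_(r, n)) : bool :=
  [set u *m H | u : 'rV['F_2]_r] == dual_code C.

Definition has_wt1_row n r (H : 'M['F_2]_(r, n)) (S : {set 'I_n}) : bool :=
  [exists i : 'I_r, #|[set j in S | H i j != 0]| == 1%N].

Definition stop_ok n r (H : 'M['F_2]_(r, n)) (s : nat) : bool :=
  [forall S : {set 'I_n}, ((S != set0) && (#|S| < s)%N) ==> has_wt1_row H S].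

Definition stopping_distance_is n r (H : 'M['F_2]_(r, n)) (s : nat) : bool :=
  stop_ok H s && ~~ stop_ok H s.+1.

Definition has_SR n (C : {set 'rV['F_2]_n}) (d r : nat) : bool :=
  [exists H : 'M['F_2]_(r, n), parity_check C H && stopping_distance_is H d].

Definition is_stopping_redundancy n (C : {set 'rV['F_2]_n}) (rho : nat) : Prop :=
  exists d, min_dist C d /\ has_SR C d rho /\ (forall r, has_SR C d r -> (rho <= r)%N).

Definition direct_sum_code n1 n2 (C1 : {set 'rV['F_2]_n1}) (C2 : {set 'rV['F_2]_n2})
  : {set 'rV['F_2]_(n1 + n2)} :=
  [set row_mx u v | u in C1, v in C2].

From mathcomp Require Import all_boot all_algebra.
Set Implicit Arguments. Unset Strict Implicit. Unset Printing Implicit Defensive.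
Import GRing.Theory.
Local Open Scope ring_scope.

(* If H1 and H2 are parity-check matrices of C1 and C2, the block-diagonal
   matrix diag(H1, H2) is one of C1 (+) C2, since the dual of a direct sum is
   the direct sum of the duals.  A set S of columns of diag(H1, H2) splits
   into its halves S1, S2, and a row of weight one on S is exactly a row of
   H1 of weight one on S1 or a row of H2 of weight one on S2.  Hence
   s(diag(H1, H2)) = min(s(H1), s(H2)) = min(d1, d2) = d(C1 (+) C2), and
   diag(H1, H2) has rho1 + rho2 rows. *)

Lemma card_split_ord n1 n2 (A : {pred 'I_(n1 + n2)}) :
  #|A| = (#|lshift n2 @^-1: A| + #|@rshift n1 n2 @^-1: A|)%N.
Proof.
by rewrite -!sum1_card big_split_ord; congr (_ + _)%N; apply: eq_bigl => i; rewrite inE.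
Qed.

Lemma wt_row_mx n1 n2 (u : 'rV['F_2]_n1) (v : 'rV['F_2]_n2) :
  wt (row_mx u v) = (wt u + wt v)%N.
Proof.
rewrite /wt card_split_ord.
by congr (_ + _)%N; apply: eq_card => i; rewrite !inE ?row_mxEl ?row_mxEr.
Qed.

Lemma wt0 n : wt (0 : 'rV['F_2]_n) = 0%N.
Proof. by apply/eqP; rewrite cards_eq0; apply/eqP/setP => i; rewrite !inE mxE eqxx. Qed.

Lemma linear_code0 n (C : {set 'rV['F_2]_n}) c :
  is_linear_code C -> c \in C -> 0 \in C.
Proof. by move=> linC cC; have := linC (-1) c c cC cC; rewrite scaleN1r addNr. Qed.

Lemma is_code0 n (C : {set 'rV['F_2]_n}) k d : is_code C k d -> 0 \in C.
Proof. by move=> [linC [_ [[c cC _] _]]]; apply: linear_code0 cC. Qed.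

Lemma min_dist_unique n (C : {set 'rV['F_2]_n}) d d' :
  min_dist C d -> min_dist C d' -> d = d'.
Proof.
move=> [[c cC /andP[c0 /eqP <-]] minC] [[c' cC' /andP[c0' /eqP <-]] minC'].
by apply/eqP; rewrite eqn_leq minC // minC'.
Qed.

Section DirectSum.
Variables (n1 n2 : nat) (C1 : {set 'rV['F_2]_n1}) (C2 : {set 'rV['F_2]_n2}).
Local Notation C := (direct_sum_code C1 C2).

Lemma mem_direct_sum_row_mx u v :
  (row_mx u v \in C) = (u \in C1) && (v \in C2).
Proof.
apply/imset2P/andP => [[u' v' uC vC /eq_row_mx [-> ->]] //|[uC vC]].
by exists u v.
Qed.

Lemma mem_direct_sum x : (x \in C) = (lsubmx x \in C1) && (rsubmx x \in C2).
Proof. by rewrite -{1}(hsubmxK x) mem_direct_sum_row_mx. Qed.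

Lemma card_direct_sum : #|C| = (#|C1| * #|C2|)%N.
Proof.
rewrite /direct_sum_code curry_imset2X card_in_imset ?cardsX //.
by move=> [u v] [u' v'] _ _ /= /eq_row_mx [-> ->].
Qed.

Lemma direct_sum_linear :
  is_linear_code C1 -> is_linear_code C2 -> is_linear_code C.
Proof.
move=> linC1 linC2 a x y; rewrite !mem_direct_sum => /andP[x1 x2] /andP[y1 y2].
by rewrite !linearD !linearZ /= linC1 ?linC2.
Qed.

Hypotheses (C1_0 : 0 \in C1) (C2_0 : 0 \in C2).

Lemma direct_sum_min_dist d1 d2 :
  min_dist C1 d1 -> min_dist C2 d2 -> min_dist C (minn d1 d2).
Proof.
move=> [[c1 c1C /andP[c1_0 /eqP wc1]] min1] [[c2 c2C /andP[c2_0 /eqP wc2]] min2].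
split.
  have [_|_] := leqP d1 d2.
    exists (row_mx c1 0); first by rewrite mem_direct_sum_row_mx c1C C2_0.
    rewrite wt_row_mx wt0 addn0 wc1 eqxx andbT -row_mx0.
    by apply: contra c1_0 => /eqP /eq_row_mx [-> _].
  exists (row_mx 0 c2); first by rewrite mem_direct_sum_row_mx C1_0 c2C.
  rewrite wt_row_mx wt0 add0n wc2 eqxx andbT -row_mx0.
  by apply: contra c2_0 => /eqP /eq_row_mx [_ ->].
move=> x; rewrite -(hsubmxK x) mem_direct_sum_row_mx wt_row_mx.
move: (lsubmx x) (rsubmx x) => u v /andP[uC vC] x0.
have [u0|u0] := eqVneq u 0.
  have v0 : v != 0 by apply: contra x0 => /eqP v0; rewrite u0 v0 row_mx0.
  by rewrite (leq_trans (geq_minr _ _)) // (leq_trans (min2 _ vC v0)) ?leq_addl.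
by rewrite (leq_trans (geq_minl _ _)) // (leq_trans (min1 _ uC u0)) ?leq_addr.
Qed.

Lemma mem_dual_direct_sum y1 y2 :
  (row_mx y1 y2 \in dual_code C) = (y1 \in dual_code C1) && (y2 \in dual_code C2).
Proof.
rewrite !inE; apply/forall_inP/andP => [dualC | [/forall_inP dual1 /forall_inP dual2]].
  split; apply/forall_inP => x xC.
    have := dualC (row_mx x 0).
    by rewrite mem_direct_sum_row_mx xC C2_0 tr_row_mx mul_row_col mul0mx addr0; apply.
  have := dualC (row_mx 0 x).
  by rewrite mem_direct_sum_row_mx C1_0 xC tr_row_mx mul_row_col mul0mx add0r; apply.
move=> x; rewrite -(hsubmxK x) mem_direct_sum_row_mx => /andP[x1 x2].
by rewrite tr_row_mx mul_row_col (eqP (dual1 _ x1)) (eqP (dual2 _ x2)) addr0.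
Qed.

Lemma parity_check_block_diag r1 r2 (H1 : 'M_(r1, n1)) (H2 : 'M_(r2, n2)) :
  parity_check C1 H1 -> parity_check C2 H2 -> parity_check C (block_mx H1 0 0 H2).
Proof.
move=> /eqP pc1 /eqP pc2; apply/eqP/setP => y.
rewrite -(hsubmxK y) mem_dual_direct_sum -pc1 -pc2.
apply/imsetP/andP => [[u _]|[/imsetP [u1 _ ->] /imsetP [u2 _ ->]]].
  rewrite -(hsubmxK u) mul_row_block !mulmx0 addr0 add0r => /eq_row_mx [-> ->].
  by split; apply: imset_f.
exists (row_mx u1 u2) => //.
by rewrite mul_row_block !mulmx0 addr0 add0r.
Qed.

End DirectSum.

Lemma direct_sum_is_code n1 n2 k1 k2 d1 d2
  (C1 : {set 'rV['F_2]_n1}) (C2 : {set 'rV['F_2]_n2}) :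
  is_code C1 k1 d1 -> is_code C2 k2 d2 ->
  is_code (direct_sum_code C1 C2) (k1 + k2) (minn d1 d2).
Proof.
move=> code1 code2; have C1_0 := is_code0 code1; have C2_0 := is_code0 code2.
move: code1 code2 => [lin1 [[_ card1] md1]] [lin2 [[_ card2] md2]].
have lin := direct_sum_linear lin1 lin2.
split; first by [].
split; first by split; rewrite // card_direct_sum card1 card2 expnD.
exact: direct_sum_min_dist.
Qed.

Lemma has_wt1_row0 r n (H : 'M['F_2]_(r, n)) : has_wt1_row H set0 = false.
Proof.
apply/existsP => [[i]]; have -> : [set j in set0 | H i j != 0] = set0.
  by apply/setP => j; rewrite !inE.
by rewrite cards0.
Qed.

Lemma stop_ok_leq r n (H : 'M['F_2]_(r, n)) s t :
  (t <= s)%N -> stop_ok H s -> stop_ok H t.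
Proof.
move=> ts /forallP okH; apply/forallP => S; apply/implyP => /andP [S0 St].
by apply: (implyP (okH S)); rewrite S0 (leq_trans St ts).
Qed.

Section BlockDiagonal.
Variables (n1 n2 r1 r2 : nat) (H1 : 'M['F_2]_(r1, n1)) (H2 : 'M['F_2]_(r2, n2)).
Local Notation H := (block_mx H1 0 0 H2).

Lemma card_support_block_diag_l i (S : {set 'I_(n1 + n2)}) :
  #|[set j in S | H (lshift r2 i) j != 0]| = #|[set j in lshift n2 @^-1: S | H1 i j != 0]|.
Proof.
rewrite card_split_ord [X in (_ + X)%N]eq_card0 ?addn0.
  by apply: eq_card => j; rewrite !inE block_mxEul.
by move=> j; rewrite !inE block_mxEur mxE eqxx andbF.
Qed.

Lemma card_support_block_diag_r i (S : {set 'I_(n1 + n2)}) :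
  #|[set j in S | H (rshift r1 i) j != 0]| = #|[set j in @rshift n1 n2 @^-1: S | H2 i j != 0]|.
Proof.
rewrite card_split_ord [X in (X + _)%N]eq_card0 ?add0n.
  by apply: eq_card => j; rewrite !inE block_mxEdr.
by move=> j; rewrite !inE block_mxEdl mxE eqxx andbF.
Qed.

Lemma has_wt1_row_block_diag (S : {set 'I_(n1 + n2)}) :
  has_wt1_row H S =
  has_wt1_row H1 (lshift n2 @^-1: S) || has_wt1_row H2 (@rshift n1 n2 @^-1: S).
Proof.
apply/existsP/orP => [[i]|[] /existsP [i]].
- rewrite -(splitK i); case: (split i) => i' /=.
    by rewrite card_support_block_diag_l => wt1; left; apply/existsP; exists i'.
  by rewrite card_support_block_diag_r => wt1; right; apply/existsP; exists i'.
- by exists (lshift r2 i); rewrite card_support_block_diag_l.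
- by exists (rshift r1 i); rewrite card_support_block_diag_r.
Qed.

Lemma has_wt1_row_block_diag_l (S1 : {set 'I_n1}) :
  has_wt1_row H (lshift n2 @: S1) = has_wt1_row H1 S1.
Proof.
rewrite has_wt1_row_block_diag.
have -> : lshift n2 @^-1: (lshift n2 @: S1) = S1.
  by apply/setP => i; rewrite inE mem_imset //; apply: lshift_inj.
have -> : @rshift n1 n2 @^-1: (lshift n2 @: S1) = set0.
  by apply/setP => i; rewrite !inE; apply/imsetP => [[j _ /eqP]]; rewrite eq_rlshift.
by rewrite has_wt1_row0 orbF.
Qed.

Lemma has_wt1_row_block_diag_r (S2 : {set 'I_n2}) :
  has_wt1_row H (@rshift n1 n2 @: S2) = has_wt1_row H2 S2.
Proof.
rewrite has_wt1_row_block_diag.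
have -> : @rshift n1 n2 @^-1: (@rshift n1 n2 @: S2) = S2.
  by apply/setP => i; rewrite inE mem_imset //; apply: rshift_inj.
have -> : lshift n2 @^-1: (@rshift n1 n2 @: S2) = set0.
  by apply/setP => i; rewrite !inE; apply/imsetP => [[j _ /eqP]]; rewrite eq_lrshift.
by rewrite has_wt1_row0.
Qed.

Lemma stop_ok_block_diag s : stop_ok H s = stop_ok H1 s && stop_ok H2 s.
Proof.
apply/forallP/andP => [okH | [/forallP ok1 /forallP ok2] S].
  split; apply/forallP => S; apply/implyP => /andP [S0 Ss].
    rewrite -has_wt1_row_block_diag_l; apply: (implyP (okH _)).
    by rewrite imset_eq0 S0 card_imset //; apply: lshift_inj.
  rewrite -has_wt1_row_block_diag_r; apply: (implyP (okH _)).
  by rewrite imset_eq0 S0 card_imset //; apply: rshift_inj.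
apply/implyP => /andP [S0 Ss]; rewrite has_wt1_row_block_diag.
have cardS := card_split_ord S.
have [S1_0|S1_0] := eqVneq (lshift n2 @^-1: S) set0.
  rewrite S1_0 cards0 add0n in cardS.
  by apply/orP; right; apply: (implyP (ok2 _)); rewrite -card_gt0 -cardS card_gt0 S0.
apply/orP; left; apply: (implyP (ok1 _)).
by rewrite S1_0 (leq_ltn_trans _ Ss) // cardS leq_addr.
Qed.

Lemma stopping_distance_block_diag d1 d2 :
  stopping_distance_is H1 d1 -> stopping_distance_is H2 d2 ->
  stopping_distance_is H (minn d1 d2).
Proof.
move=> /andP [ok1 nok1] /andP [ok2 nok2].
rewrite /stopping_distance_is !stop_ok_block_diag.
rewrite (stop_ok_leq (geq_minl _ _) ok1) (stop_ok_leq (geq_minr _ _) ok2) /=.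
by have [_|_] := leqP d1 d2; rewrite ?(negbTE nok1) ?(negbTE nok2) ?andbF.
Qed.

End BlockDiagonal.

Lemma has_SR_direct_sum n1 n2 (C1 : {set 'rV['F_2]_n1}) (C2 : {set 'rV['F_2]_n2})
  d1 d2 r1 r2 :
  0 \in C1 -> 0 \in C2 -> has_SR C1 d1 r1 -> has_SR C2 d2 r2 ->
  has_SR (direct_sum_code C1 C2) (minn d1 d2) (r1 + r2).
Proof.
move=> C1_0 C2_0 /existsP [H1 /andP [pc1 sd1]] /existsP [H2 /andP [pc2 sd2]].
apply/existsP; exists (block_mx H1 0 0 H2).
by rewrite parity_check_block_diag ?stopping_distance_block_diag.
Qed.

Lemma stopping_redundancy_leq n (C : {set 'rV['F_2]_n}) d r :
  min_dist C d -> has_SR C d r ->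
  exists2 rho, is_stopping_redundancy C rho & (rho <= r)%N.
Proof.
move=> mdC srC; have exSR : exists r, has_SR C d r by exists r.
have [rho srC_rho minimal] := ex_minnP exSR.
by exists rho; [exists d | apply: minimal].
Qed.

Theorem theorem7 (n1 n2 k1 k2 d1 d2 : nat)
  (C1 : {set 'rV['F_2]_n1}) (C2 : {set 'rV['F_2]_n2}) (rho1 rho2 : nat) :
  is_code C1 k1 d1 -> is_code C2 k2 d2 ->
  is_stopping_redundancy C1 rho1 -> is_stopping_redundancy C2 rho2 ->
  is_code (direct_sum_code C1 C2) (k1 + k2) (minn d1 d2) /\
  exists rho3, is_stopping_redundancy (direct_sum_code C1 C2) rho3 /\
               (rho3 <= rho1 + rho2)%N.
Proof.
move=> code1 code2 [d1' [md1 [sr1 _]]] [d2' [md2 [sr2 _]]].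
rewrite (min_dist_unique md1 code1.2.2) in sr1.
rewrite (min_dist_unique md2 code2.2.2) in sr2.
have code3 := direct_sum_is_code code1 code2.
have sr3 := has_SR_direct_sum (is_code0 code1) (is_code0 code2) sr1 sr2.
have [rho3 ? ?] := stopping_redundancy_leq code3.2.2 sr3.
by split; last exists rho3.
Qed.
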